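(* Let $k$ be a positive semidefinite covariance kernel, $x_1,\dots,x_N\in\mathbb{R}^d$, and $K$ the $N\times N$ real symmetric positive semidefinite matrix with entries $K_{ij}=k(x_i,x_j)$. Let $\sigma>0$, $\varepsilon\ge0$, and let $\Phi\in\mathbb{C}^{N\times M}$ with $M<N$ be such that $\tilde K=\Phi\Phi^*$ satisfies $\|\tilde K-K\|\le N\varepsilon$. Let $A_{\mathrm{FS}}=\Phi\Phi^*+\sigma^2I_N$ and $A_{\mathrm{WS}}=\Phi^*\Phi+\sigma^2I_M$, with condition numbers $\kappa_{\mathrm{FS}}=\kappa(A_{\mathrm{FS}})$ and $\kappa_{\mathrm{WS}}=\kappa(A_{\mathrm{WS}})$. Then both satisfy \[ \kappa_{\mathrm{FS}},\ \kappa_{\mathrm{WS}}\;\le\;\left(1+\frac{\varepsilon N}{\sigma^2}\right)\kappa(K+\sigma^2I)+\frac{\varepsilon N}{\sigma^2}. \]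
   Context: $\Phi^*$ denotes the conjugate transpose of $\Phi$; $\|\cdot\|$ is the spectral norm; $\kappa(A)=\|A\|\,\|A^{-1}\|$. *)

From HB Require Import structures.
From mathcomp Require Import all_boot all_order all_algebra.
From mathcomp Require Import boolp classical_sets reals.
From mathcomp.real_closed Require Import complex.
Set Implicit Arguments. Unset Strict Implicit. Unset Printing Implicit Defensive.
Import Order.TTheory GRing.Theory Num.Theory.
Local Open Scope ring_scope.
Local Open Scope classical_set_scope.

Definition ctrmx (R : rcfType) m n (A : 'M[R[i]]_(m, n)) : 'M[R[i]]_(n, m) :=
  (map_mx (@conjc R) A)^T.

Definition vnorm2 (R : rcfType) n (v : 'cV[R[i]]_n) : R :=
  Num.sqrt (\sum_i (@complex.Re R (v i 0) ^+ 2 + @complex.Im R (v i 0) ^+ 2)).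

Definition specnorm (R : realType) m n (A : 'M[R[i]]_(m, n)) : R :=
  sup [set vnorm2 (A *m v) | v in [set v : 'cV[R[i]]_n | vnorm2 v <= 1]].

Definition condnum (R : realType) n (A : 'M[R[i]]_n) : R :=
  specnorm A * specnorm (invmx A).

Definition cplx_mx (R : rcfType) m n (A : 'M[R]_(m, n)) : 'M[R[i]]_(m, n) :=
  map_mx (fun r => r%:C%C) A.

Definition psd_kernel (R : realType) (d : nat) (k : 'rV[R]_d -> 'rV[R]_d -> R) :=
  (forall x y, k x y = k y x) /\
  (forall (n : nat) (x : 'I_n -> 'rV[R]_d) (c : 'I_n -> R),
      0 <= \sum_i \sum_j c i * c j * k (x i) (x j)).

Definition gram_mx (R : realType) d N (k : 'rV[R]_d -> 'rV[R]_d -> R)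
  (x : 'I_N -> 'rV[R]_d) : 'M[R]_N := \matrix_(i, j) k (x i) (x j).

From HB Require Import structures.
From mathcomp Require Import all_boot all_order all_algebra.
From mathcomp Require Import boolp classical_sets reals.
From mathcomp.real_closed Require Import complex.
From mathcomp Require Import ring lra.
Import Order.TTheory GRing.Theory Num.Theory.
Set Implicit Arguments. Unset Strict Implicit. Unset Printing Implicit Defensive.
Local Open Scope ring_scope.

(* Write s = sigma^2 and e = N eps.  Phi Phi^* and Phi^* Phi are positive
   semidefinite, so both shifted matrices are bounded below by s and their
   condition numbers are at most their norms divided by s.  Moreover
   |Phi^* Phi + s| <= |Phi Phi^* + s| <= |K + s| + e.  Since M < N, Phi^* has a
   nonzero null vector v, on which the Rayleigh quotient of K + s is at most
   s + e; Cauchy-Schwarz for the positive form of K + s turns this into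
   1 <= (s + e) |(K + s)^-1|.  Hence
   |Phi Phi^* + s| / s <= ((s + e) |K + s| |(K + s)^-1| + e) / s,
   which is the claimed bound. *)

Section ComplexVectors.

Variable R : rcfType.

Definition sqnorm n (v : 'cV[R[i]]_n) : R :=
  \sum_i (complex.Re (v i 0) ^+ 2 + complex.Im (v i 0) ^+ 2).

Definition redot n (u v : 'cV[R[i]]_n) : R :=
  \sum_i (complex.Re (u i 0) * complex.Re (v i 0) + complex.Im (u i 0) * complex.Im (v i 0)).

Variable n : nat.
Implicit Types u v w : 'cV[R[i]]_n.

Lemma redotC u v : redot u v = redot v u.
Proof. by apply: eq_bigr => i _; rewrite mulrC [X in _ + X]mulrC. Qed.

Lemma redotDr u v w : redot u (v + w) = redot u v + redot u w.
Proof.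
rewrite /redot -big_split; apply: eq_bigr => i _; rewrite mxE.
by case: (u i 0) => a b; case: (v i 0) => x y; case: (w i 0) => z t /=; ring.
Qed.

Lemma redotNr u v : redot u (- v) = - redot u v.
Proof.
rewrite /redot -sumrN; apply: eq_bigr => i _; rewrite mxE.
by case: (u i 0) => a b; case: (v i 0) => x y /=; ring.
Qed.

Lemma redotZr (r : R) u v : redot u (r%:C%C *: v) = r * redot u v.
Proof.
rewrite /redot mulr_sumr; apply: eq_bigr => i _; rewrite mxE.
by case: (u i 0) => a b; case: (v i 0) => x y /=; ring.
Qed.

Lemma redotDl u v w : redot (u + v) w = redot u w + redot v w.
Proof. by rewrite redotC redotDr !(redotC w). Qed.

Lemma redotZl (r : R) u v : redot (r%:C%C *: u) v = r * redot u v.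
Proof. by rewrite redotC redotZr redotC. Qed.

Lemma redot0l v : redot 0 v = 0.
Proof. by rewrite /redot big1 // => i _; rewrite mxE /= !mul0r addr0. Qed.

Lemma redotvv v : redot v v = sqnorm v.
Proof. by apply: eq_bigr => i _; rewrite !expr2. Qed.

Lemma sqnorm_ge0 v : 0 <= sqnorm v.
Proof. by apply: sumr_ge0 => i _; rewrite addr_ge0 ?sqr_ge0. Qed.

Lemma sqnorm_eq0 v : (sqnorm v == 0) = (v == 0).
Proof.
apply/idP/eqP => [|->]; last by rewrite -redotvv redot0l.
rewrite psumr_eq0 => [/allP v0|i _]; last by rewrite addr_ge0 ?sqr_ge0.
apply/matrixP => i j; rewrite (ord1 j) mxE.
move: (v0 i (mem_index_enum _)); rewrite implyTb paddr_eq0 ?sqr_ge0 //.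
by rewrite !sqrf_eq0 => /andP[/eqP re /eqP im]; apply/eqP; rewrite eq_complex re im /= !eqxx.
Qed.

Lemma sqnorm0 : sqnorm (0 : 'cV[R[i]]_n) = 0.
Proof. by apply/eqP; rewrite sqnorm_eq0. Qed.

Lemma vnorm2_sqr v : vnorm2 v ^+ 2 = sqnorm v.
Proof. exact/sqr_sqrtr/sqnorm_ge0. Qed.

Lemma vnorm2_ge0 v : 0 <= vnorm2 v.
Proof. exact: sqrtr_ge0. Qed.

Lemma vnorm2_eq0 v : (vnorm2 v == 0) = (v == 0).
Proof. by rewrite sqrtr_eq0 -sqnorm_eq0 eq_le sqnorm_ge0 andbT. Qed.

Lemma vnorm20 : vnorm2 (0 : 'cV[R[i]]_n) = 0.
Proof. by apply/eqP; rewrite vnorm2_eq0. Qed.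

Lemma vnorm2N v : vnorm2 (- v) = vnorm2 v.
Proof. by rewrite /vnorm2 -/(sqnorm _) -/(sqnorm v) -!redotvv redotNr redotC redotNr opprK. Qed.

Lemma redot_le u v : redot u v <= vnorm2 u * vnorm2 v.
Proof.
set a := vnorm2 u; set b := vnorm2 v.
have [a0 b0] : 0 <= a /\ 0 <= b by split; apply: vnorm2_ge0.
have [ab0|] := ltP 0 (a * b); last first.
  rewrite le_eqVlt ltNge mulr_ge0 // orbF mulf_eq0 => /orP[].
    by rewrite vnorm2_eq0 => /eqP->; rewrite redot0l mulr_ge0.
  by rewrite redotC vnorm2_eq0 => /eqP->; rewrite redot0l mulr_ge0.
(* 0 <= sqnorm (b u - a v) = 2 a b (a b - redot u v) *)
have : 0 <= \sum_i ((b * complex.Re (u i 0) - a * complex.Re (v i 0)) ^+ 2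
                    + (b * complex.Im (u i 0) - a * complex.Im (v i 0)) ^+ 2).
  by apply: sumr_ge0 => i _; rewrite addr_ge0 ?sqr_ge0.
have -> : \sum_i ((b * complex.Re (u i 0) - a * complex.Re (v i 0)) ^+ 2
                  + (b * complex.Im (u i 0) - a * complex.Im (v i 0)) ^+ 2)
          = b ^+ 2 * sqnorm u - 2 * a * b * redot u v + a ^+ 2 * sqnorm v.
  rewrite /sqnorm /redot !mulr_sumr -sumrN -!big_split /=.
  by apply: eq_bigr => i _; ring.
rewrite -!vnorm2_sqr -/a -/b; nra.
Qed.

Lemma normr_redot_le u v : `|redot u v| <= vnorm2 u * vnorm2 v.
Proof.
rewrite ler_norml redot_le andbT lerNl -redotNr -(vnorm2N v).
exact: redot_le.
Qed.

Lemma vnorm2D u v : vnorm2 (u + v) <= vnorm2 u + vnorm2 v.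
Proof.
rewrite -ler_sqr ?nnegrE ?addr_ge0 ?vnorm2_ge0 // vnorm2_sqr -redotvv.
rewrite redotDr !(redotC (u + v)) !redotDr !redotvv (redotC v u) -!vnorm2_sqr.
have := redot_le u v; lra.
Qed.

Lemma vnorm2Z c v : vnorm2 (c *: v) = Normc.normc c * vnorm2 v.
Proof.
case: c => a b; rewrite /vnorm2 -sqrtrM ?addr_ge0 ?sqr_ge0 // mulr_sumr.
by congr Num.sqrt; apply: eq_bigr => i _; rewrite mxE; case: (v i 0) => x y /=; ring.
Qed.

Lemma vnorm2Zr (r : R) v : vnorm2 (r%:C%C *: v) = `|r| * vnorm2 v.
Proof. by rewrite vnorm2Z /= expr0n addr0 sqrtr_sqr. Qed.

Lemma normc_le_vnorm2 v j : Normc.normc (v j 0) <= vnorm2 v.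
Proof.
rewrite /vnorm2 (bigD1 j) //=; case: (v j 0) => a b /=.
have rest_ge0 : 0 <= \sum_(i < n | i != j) (complex.Re (v i 0) ^+ 2 + complex.Im (v i 0) ^+ 2).
  by apply: sumr_ge0 => i _; rewrite addr_ge0 ?sqr_ge0.
by rewrite ler_sqrt ?lerDl // !addr_ge0 ?sqr_ge0.
Qed.

Lemma vnorm2_sum (I : Type) (r : seq I) (f : I -> 'cV[R[i]]_n) :
  vnorm2 (\sum_(j <- r) f j) <= \sum_(j <- r) vnorm2 (f j).
Proof.
elim/big_rec2: _ => [|j y1 y2 _ IH]; first by rewrite vnorm20.
by apply: le_trans (vnorm2D _ _) _; rewrite lerD2l.
Qed.

End ComplexVectors.

Lemma complex_Re_sum (R : rcfType) (I : Type) (r : seq I) (f : I -> R[i]) :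
  complex.Re (\sum_(j <- r) f j) = \sum_(j <- r) complex.Re (f j).
Proof. by apply: (big_morph (@complex.Re R)) => // -[a b] [c d]. Qed.

Lemma complex_Im_sum (R : rcfType) (I : Type) (r : seq I) (f : I -> R[i]) :
  complex.Im (\sum_(j <- r) f j) = \sum_(j <- r) complex.Im (f j).
Proof. by apply: (big_morph (@complex.Im R)) => // -[a b] [c d]. Qed.

Lemma discr_le (F : realFieldType) (a b c : F) :
  0 <= c -> (forall t, 0 <= a + 2 * t * b + t ^+ 2 * c) -> b ^+ 2 <= a * c.
Proof.
move=> c_ge0 q; have [c_gt0|c_le0] := ltP 0 c.
  have := q (- b / c); have : - b / c * c = - b by rewrite divfK ?gt_eqF.
  nra.
have c0 : c = 0 by apply/eqP; rewrite eq_le c_le0.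
rewrite c0 mulr0 in q *; have [->|b_neq0] := eqVneq b 0; first by rewrite expr0n.
have := q (- (a + 1) / (2 * b)); rewrite mulr0 addr0.
have -> : 2 * (- (a + 1) / (2 * b)) * b = - (a + 1) by field.
lra.
Qed.

Lemma wide_mx_ker (F : fieldType) m n (A : 'M[F]_(m, n)) :
  (m < n)%N -> exists2 v : 'cV[F]_n, v != 0 & A *m v = 0.
Proof.
move=> lt_mn; have : kermx A^T != 0.
  rewrite kermx_eq0 /row_free; apply: contraTN lt_mn => /eqP rkA.
  by rewrite -leqNgt -[X in (X <= _)%N]rkA rank_leq_col.
case/rowV0Pn => w /sub_kermxP wA w_neq0; exists w^T; first by rewrite trmx_eq0.
by rewrite -[A]trmxK -trmx_mul wA trmx0.
Qed.

Section Adjoint.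

Variable R : rcfType.
Implicit Types m n p : nat.

Lemma ctrmxM m n p (A : 'M[R[i]]_(m, n)) (B : 'M[R[i]]_(n, p)) :
  ctrmx (A *m B) = ctrmx B *m ctrmx A.
Proof. by rewrite /ctrmx map_mxM trmx_mul. Qed.

Lemma ctrmxK m n (A : 'M[R[i]]_(m, n)) : ctrmx (ctrmx A) = A.
Proof. by apply/matrixP => i j; rewrite !mxE conjcK. Qed.

Lemma ctrmxD m n (A B : 'M[R[i]]_(m, n)) : ctrmx (A + B) = ctrmx A + ctrmx B.
Proof. by rewrite /ctrmx map_mxD linearD. Qed.

Lemma ctrmx_scalar n (s : R) : ctrmx (s%:C%C%:M : 'M[R[i]]_n) = s%:C%C%:M.
Proof. by rewrite /ctrmx map_scalar_mx tr_scalar_mx /= oppr0. Qed.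

Lemma redotE n (u v : 'cV[R[i]]_n) : redot u v = complex.Re ((ctrmx u *m v) 0 0).
Proof.
rewrite mxE complex_Re_sum; apply: eq_bigr => i _; rewrite !mxE.
by case: (u i 0) => a b; case: (v i 0) => c d /=; ring.
Qed.

Lemma redot_ctrmx m n (A : 'M[R[i]]_(m, n)) u v :
  redot u (A *m v) = redot (ctrmx A *m u) v.
Proof. by rewrite !redotE ctrmxM ctrmxK mulmxA. Qed.

Lemma redot_mulmx_ctrmx m n (A : 'M[R[i]]_(m, n)) u :
  redot u (A *m ctrmx A *m u) = sqnorm (ctrmx A *m u).
Proof. by rewrite -mulmxA redot_ctrmx redotvv. Qed.

Lemma redot_shift n (X : 'M[R[i]]_n) (s : R) u :
  redot u ((X + s%:C%C%:M) *m u) = redot u (X *m u) + s * sqnorm u.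
Proof. by rewrite mulmxDl mul_scalar_mx redotDr redotZr redotvv. Qed.

(* For Hermitian X the form u^* X u is real, so it is recorded by its real
   part [redot u (X *m u)]. *)
Definition psdmx n (X : 'M[R[i]]_n) :=
  ctrmx X = X /\ forall u, 0 <= redot u (X *m u).

Lemma psdmx_mulmx_ctrmx m n (A : 'M[R[i]]_(m, n)) : psdmx (A *m ctrmx A).
Proof.
split=> [|u]; first by rewrite ctrmxM ctrmxK.
by rewrite redot_mulmx_ctrmx sqnorm_ge0.
Qed.

Lemma psdmx_shift n (X : 'M[R[i]]_n) (s : R) :
  psdmx X -> 0 <= s -> psdmx (X + s%:C%C%:M).
Proof.
move=> [hX X_ge0] s_ge0; split=> [|u]; first by rewrite ctrmxD hX ctrmx_scalar.
by rewrite redot_shift addr_ge0 ?mulr_ge0 ?sqnorm_ge0.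
Qed.

Lemma psdmx_cauchy_schwarz n (X : 'M[R[i]]_n) u w : psdmx X ->
  redot u (X *m w) ^+ 2 <= redot u (X *m u) * redot w (X *m w).
Proof.
move=> [hX X_ge0]; apply: discr_le => [|t]; first exact: X_ge0.
have sym : redot w (X *m u) = redot u (X *m w) by rewrite redot_ctrmx hX redotC.
have := X_ge0 (u + t%:C%C *: w).
rewrite mulmxDr -scalemxAr !(redotDl, redotDr, redotZl, redotZr) sym.
lra.
Qed.

Lemma vnorm2_lbound n (X : 'M[R[i]]_n) (c : R) :
  (forall u, c * sqnorm u <= redot u (X *m u)) ->
  forall u, c * vnorm2 u <= vnorm2 (X *m u).
Proof.
move=> X_ge u; have := le_trans (X_ge u) (ler_normlW (normr_redot_le _ _)).
rewrite -vnorm2_sqr; have := vnorm2_ge0 u; have := vnorm2_ge0 (X *m u).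
have [->|u_neq0] := eqVneq u 0; first by rewrite vnorm20 mulr0.
have : 0 < vnorm2 u by rewrite lt_def vnorm2_eq0 u_neq0 vnorm2_ge0.
nra.
Qed.

Lemma psdmx_shift_lbound n (X : 'M[R[i]]_n) (s : R) : psdmx X ->
  forall u, s * vnorm2 u <= vnorm2 ((X + s%:C%C%:M) *m u).
Proof.
move=> [_ X_ge0]; apply: vnorm2_lbound => u.
by rewrite redot_shift lerDr.
Qed.

Lemma lbound_unitmx n (X : 'M[R[i]]_n) (c : R) : 0 < c ->
  (forall u, c * vnorm2 u <= vnorm2 (X *m u)) -> X \in unitmx.
Proof.
move=> c_gt0 X_ge; rewrite -unitmx_tr -row_free_unit; apply/inj_row_free => w wX.
apply/eqP; rewrite -trmx_eq0 -vnorm2_eq0 eq_le vnorm2_ge0 andbT.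
rewrite -(pmulr_rle0 _ c_gt0) (le_trans (X_ge w^T)) //.
by rewrite -[X]trmxK -trmx_mul wX trmx0 vnorm20.
Qed.

Lemma vnorm2_mulmx_ctrmx_le m n (A : 'M[R[i]]_(m, n)) (c : R) : 0 <= c ->
  (forall w, sqnorm (A *m w) <= c * sqnorm w) ->
  forall u, vnorm2 (A *m (ctrmx A *m u)) <= c * vnorm2 u.
Proof.
move=> c_ge0 A_le u.
set a := vnorm2 u; set p := vnorm2 (ctrmx A *m u); set r := vnorm2 (A *m (ctrmx A *m u)).
have [a_ge0 p_ge0 r_ge0] : [/\ 0 <= a, 0 <= p & 0 <= r] by split; apply: vnorm2_ge0.
have p2 : p ^+ 2 <= a * r.
  by rewrite vnorm2_sqr -redot_mulmx_ctrmx -mulmxA (ler_normlW (normr_redot_le _ _)).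
have r2 : r ^+ 2 <= c * p ^+ 2 by rewrite !vnorm2_sqr A_le.
have [r0|r_neq0] := eqVneq r 0; first by rewrite r0 mulr_ge0.
have : 0 < r by rewrite lt_def r_neq0.
nra.
Qed.

End Adjoint.

Section SpectralNorm.

Variable R : realType.
Implicit Types m n : nat.
Local Open Scope classical_set_scope.

Lemma mulmx_sum_col m n (A : 'M[R[i]]_(m, n)) (v : 'cV[R[i]]_n) :
  A *m v = \sum_j v j 0 *: col j A.
Proof.
apply/matrixP => i k; rewrite (ord1 k) !mxE summxE; apply: eq_bigr => j _.
by rewrite !mxE mulrC.
Qed.

Lemma specnorm_set_bounded m n (A : 'M[R[i]]_(m, n)) :
  has_ubound [set vnorm2 (A *m v) | v in [set v : 'cV[R[i]]_n | vnorm2 v <= 1]].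
Proof.
exists (\sum_j vnorm2 (col j A)) => _ [v /= v_le1 <-].
rewrite mulmx_sum_col; apply: le_trans (vnorm2_sum _ _) _.
apply: ler_sum => j _; rewrite vnorm2Z ler_piMl ?vnorm2_ge0 //.
exact: le_trans (normc_le_vnorm2 _ _) v_le1.
Qed.

Lemma vnorm2_mulmx_le1 m n (A : 'M[R[i]]_(m, n)) v :
  vnorm2 v <= 1 -> vnorm2 (A *m v) <= specnorm A.
Proof. by move=> v_le1; apply: (ub_le_sup (specnorm_set_bounded A)); exists v. Qed.

Lemma specnorm_le m n (A : 'M[R[i]]_(m, n)) (C : R) :
  (forall v, vnorm2 v <= 1 -> vnorm2 (A *m v) <= C) -> specnorm A <= C.
Proof.
move=> A_le; apply: ge_sup => [|_ [v /= v_le1 <-]]; last exact: A_le.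
by exists (vnorm2 (A *m 0)), 0; rewrite //= vnorm20 ler01.
Qed.

Lemma specnorm_ge0 m n (A : 'M[R[i]]_(m, n)) : 0 <= specnorm A.
Proof.
apply: le_trans (vnorm2_mulmx_le1 A (v := 0) _); first exact: vnorm2_ge0.
by rewrite vnorm20 ler01.
Qed.

Lemma vnorm2_mulmx_le m n (A : 'M[R[i]]_(m, n)) v :
  vnorm2 (A *m v) <= specnorm A * vnorm2 v.
Proof.
have [->|v_neq0] := eqVneq v 0; first by rewrite mulmx0 !vnorm20 mulr0.
have v_gt0 : 0 < vnorm2 v by rewrite lt_def vnorm2_eq0 v_neq0 vnorm2_ge0.
have inv_ge0 : 0 <= (vnorm2 v)^-1 by rewrite invr_ge0 vnorm2_ge0.
have v'_le1 : vnorm2 ((vnorm2 v)^-1%:C%C *: v) <= 1.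
  by rewrite vnorm2Zr ger0_norm // mulVf ?gt_eqF.
have := vnorm2_mulmx_le1 A v'_le1.
rewrite -scalemxAr vnorm2Zr ger0_norm // => Av_le.
by rewrite -ler_pdivrMr // mulrC.
Qed.

Lemma specnormD m n (A B : 'M[R[i]]_(m, n)) :
  specnorm (A + B) <= specnorm A + specnorm B.
Proof.
apply: specnorm_le => v v_le1; rewrite mulmxDl.
by apply: le_trans (vnorm2D _ _) _; rewrite lerD ?vnorm2_mulmx_le1.
Qed.

Lemma normr_redot_mulmx_le n (A : 'M[R[i]]_n) u :
  `|redot u (A *m u)| <= specnorm A * sqnorm u.
Proof.
apply: le_trans (normr_redot_le _ _) _; rewrite -vnorm2_sqr expr2 mulrCA.
by rewrite ler_wpM2l ?vnorm2_ge0 ?vnorm2_mulmx_le.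
Qed.

Lemma redot_le_perturb n (X Y : 'M[R[i]]_n) v :
  redot v (Y *m v) <= redot v (X *m v) + specnorm (X - Y) * sqnorm v.
Proof.
have -> : Y *m v = X *m v - (X - Y) *m v by rewrite mulmxBl opprB addrC subrK.
by rewrite redotDr redotNr lerD2l lerNl lerNnormlW ?normr_redot_mulmx_le.
Qed.

Lemma redot_shift_ker_le n p (A : 'M[R[i]]_(n, p)) (X : 'M[R[i]]_n) (s : R) v :
  ctrmx A *m v = 0 ->
  redot v ((X + s%:C%C%:M) *m v) <= (s + specnorm (A *m ctrmx A - X)) * sqnorm v.
Proof.
move=> Av0; set F := A *m ctrmx A + s%:C%C%:M.
apply: le_trans (redot_le_perturb F _ v) _.
rewrite redot_shift redot_mulmx_ctrmx Av0 sqnorm0 add0r mulrDl.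
by rewrite opprD addrACA subrr addr0.
Qed.

Lemma specnorm_invmx_le n (X : 'M[R[i]]_n) (c : R) : 0 < c ->
  (forall u, c * vnorm2 u <= vnorm2 (X *m u)) -> specnorm (invmx X) <= c^-1.
Proof.
move=> c_gt0 X_ge; have X_unit := lbound_unitmx c_gt0 X_ge.
apply: specnorm_le => w w_le1; rewrite -(ler_pM2l c_gt0) mulfV ?gt_eqF //.
by apply: le_trans (X_ge _) _; rewrite mulKVmx.
Qed.

Lemma condnum_le n (X : 'M[R[i]]_n) (c : R) : 0 < c ->
  (forall u, c * vnorm2 u <= vnorm2 (X *m u)) -> condnum X <= specnorm X / c.
Proof.
by move=> c_gt0 X_ge; rewrite ler_wpM2l ?specnorm_ge0 ?specnorm_invmx_le.
Qed.

Lemma condnum_shift_le n (X : 'M[R[i]]_n) (s : R) : psdmx X -> 0 < s ->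
  condnum (X + s%:C%C%:M) <= specnorm (X + s%:C%C%:M) / s.
Proof. by move=> psdX s_gt0; apply: condnum_le (psdmx_shift_lbound s psdX). Qed.

(* Cauchy-Schwarz for the form of X at v and y = X^-1 v:
   |v|^4 <= (v^* X v) (v^* X^-1 v). *)
Lemma rayleigh_specnorm_invmx n (X : 'M[R[i]]_n) v (l : R) :
  psdmx X -> X \in unitmx -> v != 0 -> redot v (X *m v) <= l * sqnorm v ->
  1 <= l * specnorm (invmx X).
Proof.
move=> psdX X_unit v_neq0 Xv_le.
set y := invmx X *m v; have Xy : X *m y = v by rewrite mulKVmx.
have cs := psdmx_cauchy_schwarz y v psdX.
have yXv : redot y (X *m v) = sqnorm v by rewrite redot_ctrmx psdX.1 Xy redotvv.
have yXy : redot y (X *m y) <= specnorm (invmx X) * sqnorm v.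
  by rewrite Xy redotC (ler_normlW (normr_redot_mulmx_le _ _)).
have v_gt0 : 0 < sqnorm v ^+ 2 by rewrite exprn_gt0 // lt_def sqnorm_eq0 v_neq0 sqnorm_ge0.
have := le_trans cs (ler_pM (psdX.2 y) (psdX.2 v) yXy Xv_le); rewrite yXv.
nra.
Qed.

Lemma sqnorm_ctrmx_mulmx_le m n (A : 'M[R[i]]_(m, n)) (s : R) w :
  sqnorm (ctrmx A *m w) <= (specnorm (A *m ctrmx A + s%:C%C%:M) - s) * sqnorm w.
Proof.
have := ler_normlW (normr_redot_mulmx_le (A *m ctrmx A + s%:C%C%:M) w).
rewrite redot_shift redot_mulmx_ctrmx; lra.
Qed.

(* The hypothesis [0 < m] is needed: for m = 0 the right-hand side is 0. *)
Lemma specnorm_shift_ctrmx_mulmx_le m n (A : 'M[R[i]]_(m, n)) (s : R) :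
  (0 < m)%N -> 0 <= s ->
  specnorm (ctrmx A *m A + s%:C%C%:M) <= specnorm (A *m ctrmx A + s%:C%C%:M).
Proof.
move=> m_gt0 s_ge0; set f := specnorm (A *m ctrmx A + s%:C%C%:M).
have A'_le := sqnorm_ctrmx_mulmx_le A s; rewrite -/f in A'_le.
have fs_ge0 : 0 <= f - s.
  have one_neq0 : const_mx 1 != 0 :> 'cV[R[i]]_m.
    by apply/eqP => /matrixP /(_ (Ordinal m_gt0) 0); rewrite !mxE; apply/eqP/oner_neq0.
  have : 0 < sqnorm (const_mx 1 : 'cV[R[i]]_m).
    by rewrite lt_def sqnorm_eq0 one_neq0 sqnorm_ge0.
  have := le_trans (sqnorm_ge0 _) (A'_le (const_mx 1)); nra.
have f_ge0 : 0 <= f by apply: specnorm_ge0.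
apply: specnorm_le => u u_le1; rewrite mulmxDl mul_scalar_mx.
apply: le_trans (vnorm2D _ _) _; rewrite vnorm2Zr ger0_norm //.
have := vnorm2_mulmx_ctrmx_le fs_ge0 A'_le u; rewrite ctrmxK mulmxA.
have := vnorm2_ge0 u; nra.
Qed.

End SpectralNorm.

Lemma psdmx_gram (R : realType) d N (k : 'rV[R]_d -> 'rV[R]_d -> R)
    (x : 'I_N -> 'rV[R]_d) :
  psd_kernel k -> psdmx (cplx_mx (gram_mx k x)).
Proof.
move=> [k_sym k_psd]; split=> [|u].
  by apply/matrixP => i j; rewrite !mxE /= oppr0 k_sym.
set re := fun i => complex.Re (u i 0); set im := fun i => complex.Im (u i 0).
have -> : redot u (cplx_mx (gram_mx k x) *m u)
    = \sum_i \sum_j re i * re j * k (x i) (x j)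
      + \sum_i \sum_j im i * im j * k (x i) (x j).
  rewrite /redot -big_split; apply: eq_bigr => i _.
  rewrite mxE complex_Re_sum complex_Im_sum !mulr_sumr -!big_split.
  by apply: eq_bigr => j _; rewrite !mxE /re /im; case: (u j 0) => a b /=; ring.
by rewrite addr_ge0 ?k_psd.
Qed.

Theorem lemma5p4 (R : realType) (d N M : nat)
  (k : 'rV[R]_d -> 'rV[R]_d -> R) (x : 'I_N -> 'rV[R]_d)
  (sigma eps : R) (Phi : 'M[R[i]]_(N, M)) :
  psd_kernel k ->
  0 < sigma -> 0 <= eps -> (M < N)%N ->
  specnorm (Phi *m ctrmx Phi - cplx_mx (gram_mx k x)) <= N%:R * eps ->
  let K := cplx_mx (gram_mx k x) in
  let bound := (1 + eps * N%:R / sigma ^+ 2)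
                 * condnum (K + (sigma ^+ 2)%:C%C%:M)
               + eps * N%:R / sigma ^+ 2 in
  condnum (Phi *m ctrmx Phi + (sigma ^+ 2)%:C%C%:M) <= bound /\
  condnum (ctrmx Phi *m Phi + (sigma ^+ 2)%:C%C%:M) <= bound.
Proof.
move=> k_psd sigma_gt0 eps_ge0 lt_MN Phi_K K bound.
set s := sigma ^+ 2 in bound *; set e := N%:R * eps in Phi_K.
have s_gt0 : 0 < s by rewrite exprn_gt0.
have psdK : psdmx K := psdmx_gram x k_psd.
set B := K + s%:C%C%:M in bound *; set F := Phi *m ctrmx Phi + s%:C%C%:M.
have psdB : psdmx B := psdmx_shift psdK (ltW s_gt0).
have B_unit : B \in unitmx := lbound_unitmx s_gt0 (psdmx_shift_lbound s psdK).
have invB_ge : 1 <= (s + e) * specnorm (invmx B).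
  have [v v_neq0 Phi'v] := wide_mx_ker (ctrmx Phi) lt_MN.
  apply: rayleigh_specnorm_invmx psdB B_unit v_neq0 _.
  apply: le_trans (redot_shift_ker_le K s Phi'v) _.
  by rewrite ler_wpM2r ?sqnorm_ge0 ?lerD2l.
have F_le : specnorm F <= specnorm B + e.
  have -> : F = B + (Phi *m ctrmx Phi - K) by rewrite [RHS]addrC addrA subrK.
  by apply: le_trans (specnormD _ _) _; rewrite lerD2l.
have W_le : specnorm (ctrmx Phi *m Phi + s%:C%C%:M) <= specnorm F.
  exact: specnorm_shift_ctrmx_mulmx_le (leq_ltn_trans (leq0n M) lt_MN) (ltW s_gt0).
have F_bound : specnorm F / s <= bound.
  have -> : bound = ((s + e) * specnorm (invmx B) * specnorm B + e) / s.
    by rewrite /bound /condnum /e; field; rewrite gt_eqF.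
  rewrite ler_pM2r ?invr_gt0 //; apply: le_trans F_le _.
  by rewrite lerD2r ler_peMl ?specnorm_ge0.
split; apply: le_trans F_bound.
  exact: condnum_shift_le (psdmx_mulmx_ctrmx Phi) s_gt0.
have := condnum_shift_le (psdmx_mulmx_ctrmx (ctrmx Phi)) s_gt0.
rewrite ctrmxK => W_cond; apply: le_trans W_cond _.
by rewrite ler_pM2r ?invr_gt0.
Qed.
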